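(* There exist absolute constants $c_1,c_2>0$ such that for every $M\in\{0,1\}^{m\times n}$, $$c_1\operatorname{disc}^{+}(M)\leq \operatorname{pdisc}(M)\leq c_2\operatorname{disc}^{+}(M)\quad\text{and}\quad c_1\operatorname{disc}^{-}(M)\leq \operatorname{pdisc}(M)\leq c_2\operatorname{disc}^{-}(M).$$
   Context: For $M\in\{0,1\}^{m\times n}$, $|M|$ is the number of $1$ entries, $p=|M|/(mn)$, and for $X\subset[m]$, $Y\subset[n]$, $\operatorname{disc}(X,Y)=|M[X\times Y]|-p|X||Y|$, where $|M[X\times Y]|$ is the number of $1$ entries of the submatrix with rows $X$ and columns $Y$; $\operatorname{disc}^{+}(M)=\max_{X,Y}\operatorname{disc}(X,Y)$ and $\operatorname{disc}^{-}(M)=\max_{X,Y}(-\operatorname{disc}(X,Y))$. Let $N=m+n$. The symmetrization of $M$ is the symmetric matrix $A\in\mathbb{R}^{N\times N}$ with $A_{i,j+m}=A_{j+m,i}=M_{i,j}$ for $(i,j)\in[m]\times[n]$ and all other entries $0$. Let $L\in\mathbb{R}^{N\times N}$ be the adjacency matrix of the complete bipartite graph with parts $[m]$ and $[m+1,N]$ ($L_{i,j}=1$ if exactly one of $i,j$ lies in $[m]$, else $0$). For $X\in\mathbb{R}^{N\times N}$, $\operatorname{disc}(X)=\langle X,A\rangle-p\langle X,L\rangle$, where $\langle\cdot,\cdot\rangle$ is the entrywise (Frobenius) inner product, and $\operatorname{pdisc}(M)=\max\{\operatorname{disc}(X): X \text{ symmetric positive semidefinite},\ X_{i,i}\leq 1\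 \forall i\in[N]\}$. *)

From HB Require Import structures.
From mathcomp Require Import all_boot all_order all_algebra.
From mathcomp Require Import boolp classical_sets reals.
Set Implicit Arguments. Unset Strict Implicit. Unset Printing Implicit Defensive.
Import Order.TTheory GRing.Theory Num.Theory.
Local Open Scope ring_scope.
Local Open Scope classical_set_scope.

Section Disc.
Variable R : realType.

Definition ones (m n : nat) (M : 'M[bool]_(m, n)) : R :=
  \sum_(i < m) \sum_(j < n) (M i j)%:R.

Definition density (m n : nat) (M : 'M[bool]_(m, n)) : R :=
  ones M / (m * n)%:R.

Definition disc (m n : nat) (M : 'M[bool]_(m, n))
    (X : {set 'I_m}) (Y : {set 'I_n}) : R :=
  \sum_(i in X) \sum_(j in Y) (M i j)%:R
  - density M * #|X|%:R * #|Y|%:R.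

(* disc^+ (M) = max_{X,Y} disc(X,Y).  Starting the iterated max at 0 is
   harmless since disc(emptyset, emptyset) = 0 is among the values. *)
Definition discp (m n : nat) (M : 'M[bool]_(m, n)) : R :=
  \big[Num.max/0]_(X : {set 'I_m}) \big[Num.max/0]_(Y : {set 'I_n}) disc M X Y.

Definition discm (m n : nat) (M : 'M[bool]_(m, n)) : R :=
  \big[Num.max/0]_(X : {set 'I_m}) \big[Num.max/0]_(Y : {set 'I_n}) (- disc M X Y).

(* symmetrization A of M, indices 'I_(m+n): rows [m] first, then columns *)
Definition symmetrization (m n : nat) (M : 'M[bool]_(m, n)) : 'M[R]_(m + n) :=
  \matrix_(i, j)
    match split i, split j with
    | inl a, inr b => (M a b)%:R
    | inr b, inl a => (M a b)%:R
    | _, _ => 0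
    end.

Definition bipL (m n : nat) : 'M[R]_(m + n) :=
  \matrix_(i, j)
    match split i, split j with
    | inl _, inr _ => 1
    | inr _, inl _ => 1
    | _, _ => 0
    end.

Definition frob (N : nat) (X Y : 'M[R]_N) : R :=
  \sum_(i < N) \sum_(j < N) X i j * Y i j.

Definition discX (m n : nat) (M : 'M[bool]_(m, n)) (X : 'M[R]_(m + n)) : R :=
  frob X (symmetrization M) - density M * frob X (bipL m n).

Definition psd (N : nat) (X : 'M[R]_N) : Prop :=
  X^T = X /\ forall v : 'cV[R]_N, 0 <= (v^T *m X *m v) 0 0.

(* pdisc(M) = max { disc(X) : X symmetric PSD, X_ii <= 1 } (as a sup; the
   feasible set is compact and nonempty, so the sup is attained). *)
Definition pdisc (m n : nat) (M : 'M[bool]_(m, n)) : R :=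
  sup [set discX M X | X in [set X : 'M[R]_(m + n) |
                              psd X /\ forall i, X i i <= 1]].

End Disc.

From HB Require Import structures.
From mathcomp Require Import all_boot all_order all_algebra.
From mathcomp Require Import classical_sets reals.
From mathcomp Require Import ring lra.
Set Implicit Arguments. Unset Strict Implicit. Unset Printing Implicit Defensive.
Import Order.TTheory GRing.Theory Num.Theory.
Local Open Scope ring_scope.

(* Lower bounds: for P, Q the rank-one matrix built from the indicator vector of
   P and Q is feasible and has disc equal to 2 disc(P, Q), so pdisc >= 2 disc^+.
   The discrepancies of the four quadrants (P or ~P) x (Q or ~Q) sum to zero,
   hence |disc(P, Q)| <= 3 disc^+ and |disc(P, Q)| <= 3 disc^-.

   Upper bound: a feasible X is the Gram matrix of vectors of norm at most 1
   (Cholesky elimination), and disc(X) = 2 sum_ab (M_ab - p) <x_a, y_b>.  So it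
   suffices to prove a Grothendieck-type inequality
   sum_ab B_ab <x_a, y_b> <= 512 D for every matrix B whose sums over all
   rectangles are at most D in absolute value.  Write <x, y> = E[(x.e)(y.e)]
   for uniform random signs e, and split each Rademacher sum x.e at height 8.
   The clipped parts are bounded by 8, so they contribute at most 4 * 8 * 8 * D;
   by Khintchine's fourth-moment bound the tails have L2-norm at most 1/4, so
   they contribute at most half of the supremum S of the form itself.  Hence
   S <= 256 D + S / 2. *)

Section SignSequences.
Variable R : realFieldType.

Definition sign (b : bool) : R := if b then 1 else -1.

(* A sign vector is a [seq bool] (true for +1); [sign_comb u s] is the Rademacher
   sum [\sum_k u k * s_k], and averaging over [sign_seqs K] is the expectation
   over K independent uniform signs. *)
Fixpoint sign_seqs (K : nat) : seq (seq bool) :=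
  if K is K'.+1 then
    [seq true :: s | s <- sign_seqs K'] ++ [seq false :: s | s <- sign_seqs K']
  else [:: [::]].

Fixpoint sign_comb (u : nat -> R) (s : seq bool) : R :=
  if s is b :: s' then u 0%N * sign b + sign_comb (fun k => u k.+1) s' else 0.

Lemma size_sign_seqs K : size (sign_seqs K) = (2 ^ K)%N.
Proof. by elim: K => //= K IH; rewrite size_cat !size_map IH expnS mul2n addnn. Qed.

Lemma big_sign_seqsS K (f : seq bool -> R) :
  \sum_(s <- sign_seqs K.+1) f s =
  \sum_(s <- sign_seqs K) f (true :: s) + \sum_(s <- sign_seqs K) f (false :: s).
Proof. by rewrite /= big_cat !big_map. Qed.

Lemma sum_sign_seqs_const K (c : R) : \sum_(s <- sign_seqs K) c = c * (2 ^ K)%:R.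
Proof.
elim: K => [|K IH]; first by rewrite big_seq1 mulr1.
by rewrite big_sign_seqsS IH expnS natrM; ring.
Qed.

Lemma sum_sign_seqs_nth K (f : seq bool -> R) :
  \sum_(t < 2 ^ K) f (nth [::] (sign_seqs K) t) = \sum_(s <- sign_seqs K) f s.
Proof. by rewrite (big_nth [::]) size_sign_seqs big_mkord. Qed.

Lemma sign_comb_orthogonal K (u v : nat -> R) :
  \sum_(s <- sign_seqs K) sign_comb u s * sign_comb v s =
  (2 ^ K)%:R * \sum_(k < K) u k * v k.
Proof.
elim: K u v => [|K IH] u v; first by rewrite big_ord0 big_seq1 /= !mulr0.
rewrite big_sign_seqsS -big_split /= big_ord_recl expnS natrM.
set u' := fun k => u k.+1; set v' := fun k => v k.+1.
rewrite (eq_bigr (fun s =>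
    2 * (u 0%N * v 0%N) + 2 * (sign_comb u' s * sign_comb v' s))); last first.
  by move=> s _; rewrite /sign; ring.
by rewrite big_split /= -!mulr_sumr sum_sign_seqs_const IH; ring.
Qed.

Lemma sum_sign_comb_sqr K (u : nat -> R) :
  \sum_(s <- sign_seqs K) sign_comb u s ^+ 2 = (2 ^ K)%:R * \sum_(k < K) u k ^+ 2.
Proof.
under eq_bigr do rewrite expr2.
by rewrite sign_comb_orthogonal; under eq_bigr do rewrite -expr2.
Qed.

Lemma sign_comb_fourth_moment K (u : nat -> R) :
  \sum_(s <- sign_seqs K) sign_comb u s ^+ 4 <=
  3 * (2 ^ K)%:R * (\sum_(k < K) u k ^+ 2) ^+ 2.
Proof.
elim: K u => [|K IH] u; first by rewrite big_seq1 big_ord0 /= !expr0n /= mulr0.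
rewrite big_sign_seqsS -big_split /= big_ord_recl expnS natrM.
set u' := fun k => u k.+1; set a := u 0%N.
rewrite (eq_bigr (fun s => 2 * sign_comb u' s ^+ 4 +
    12 * a ^+ 2 * sign_comb u' s ^+ 2 + 2 * a ^+ 4)); last first.
  by move=> s _; rewrite /sign; ring.
rewrite !big_split /= -!mulr_sumr sum_sign_comb_sqr sum_sign_seqs_const.
have := IH u'; rewrite -/u'.
set q := \sum_(k < K) _; set N : R := (2 ^ K)%:R; move=> IHu.
have q0 : 0 <= q by apply: sumr_ge0 => k _; exact: sqr_ge0.
have N0 : 0 <= N by exact: ler0n.
have : 0 <= N * a ^+ 4 by rewrite mulr_ge0 // exprn_even_ge0.
nra.
Qed.

End SignSequences.

Section Clipping.
Variable R : realFieldType.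

Definition clip (t x : R) : R := if x < - t then - t else if t < x then t else x.

Lemma norm_clip_le t x : 0 <= t -> `|clip t x| <= t.
Proof.
by rewrite /clip ler_norml => ?; case: (ltrP x (- t)) => ?; case: (ltrP t x) => ?; lra.
Qed.

Lemma sqr_clip_le t x : 0 <= t -> clip t x ^+ 2 <= x ^+ 2.
Proof.
by rewrite /clip => ?; case: (ltrP x (- t)) => ?; case: (ltrP t x) => ?; nra.
Qed.

Lemma sqr_clip_tail_le t x : 0 <= t -> t ^+ 2 * (x - clip t x) ^+ 2 <= x ^+ 4.
Proof.
move=> t0; rewrite (_ : 4%N = 2 + 2)%N // exprD /clip.
case: (ltrP x (- t)) => ?; [|case: (ltrP t x) => ?]; last first.
- by rewrite subrr expr0n mulr0 mulr_ge0 ?sqr_ge0.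
all: by apply: ler_pM; rewrite ?sqr_ge0 //; nra.
Qed.

End Clipping.

Lemma sum_setC (V : nmodType) (I : finType) (A : {set I}) (f : I -> V) :
  \sum_(i in A) f i + \sum_(i in ~: A) f i = \sum_i f i.
Proof.
by rewrite [RHS](bigID (mem A)) /=; congr (_ + _); apply: eq_bigl => i; rewrite inE.
Qed.

Section CutNorm.
Variable R : realFieldType.

Lemma sum_norm_le_subset_sums (I : finType) (f : I -> R) C :
  (forall P : {set I}, `|\sum_(i in P) f i| <= C) -> \sum_i `|f i| <= 2 * C.
Proof.
move=> fC; set P := [set i | 0 <= f i].
have -> : \sum_i `|f i| = \sum_(i in P) f i - \sum_(i in ~: P) f i.
  rewrite -(sum_setC P) -sumrN; congr (_ + _); apply: eq_bigr => i.
    by rewrite inE => fi0; rewrite ger0_norm.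
  by rewrite !inE -ltNge => fi0; rewrite ltr0_norm.
by have := fC P; have := fC (~: P); rewrite !ler_norml; lra.
Qed.

Lemma norm_sum_mul_le (I : finType) (x f : I -> R) T :
  (forall i, `|x i| <= T) -> `|\sum_i x i * f i| <= T * \sum_i `|f i|.
Proof.
move=> xT; rewrite mulr_sumr; apply: le_trans (ler_norm_sum _ _ _) _.
by apply: ler_sum => i _; rewrite normrM ler_wpM2r.
Qed.

Variables (I J : finType) (B : I -> J -> R) (D : R).
Hypothesis cutB : forall (P : {set I}) (Q : {set J}),
  `|\sum_(i in P) \sum_(j in Q) B i j| <= D.

Lemma sum_norm_col_le (P : {set I}) : \sum_j `|\sum_(i in P) B i j| <= 2 * D.
Proof. by apply: sum_norm_le_subset_sums => Q; rewrite exchange_big. Qed.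

Lemma bilinear_le_cut (x : I -> R) (y : J -> R) S T : 0 <= S -> 0 <= T ->
  (forall i, `|x i| <= S) -> (forall j, `|y j| <= T) ->
  `|\sum_i \sum_j B i j * (x i * y j)| <= 4 * S * T * D.
Proof.
move=> S0 T0 xS yT; set r := fun i => \sum_j B i j * y j.
have -> : \sum_i \sum_j B i j * (x i * y j) = \sum_i x i * r i.
  by apply: eq_bigr => i _; rewrite mulr_sumr; apply: eq_bigr => j _; ring.
have rP (P : {set I}) : `|\sum_(i in P) r i| <= T * (2 * D).
  rewrite /r exchange_big /=.
  have -> : \sum_j \sum_(i in P) B i j * y j = \sum_j y j * \sum_(i in P) B i j.
    by apply: eq_bigr => j _; rewrite mulr_sumr; apply: eq_bigr => i _; ring.
  by apply/(le_trans (norm_sum_mul_le _ yT)); rewrite ler_wpM2l // sum_norm_col_le.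
apply/(le_trans (norm_sum_mul_le _ xS)).
by have := ler_wpM2l S0 (sum_norm_le_subset_sums rP); lra.
Qed.

End CutNorm.

Section UnitBall.
Variable R : realFieldType.

Definition in_unit_ball K (v : nat -> R) := \sum_(k < K) v k ^+ 2 <= 1.

Lemma norm_dot_le1 K (u v : nat -> R) :
  in_unit_ball K u -> in_unit_ball K v -> `|\sum_(k < K) u k * v k| <= 1.
Proof.
rewrite /in_unit_ball => u1 v1; rewrite ler_norml.
have le_sum (e : R) : e ^+ 2 = 1 ->
    2 * (e * \sum_(k < K) u k * v k) <= \sum_(k < K) u k ^+ 2 + \sum_(k < K) v k ^+ 2.
  move=> e2; rewrite -big_split /= mulr_sumr mulr_sumr; apply: ler_sum => k _.
  by have := sqr_ge0 (e * u k - v k); nra.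
have := le_sum (-1); rewrite sqrrN expr1n => /(_ erefl).
by have := le_sum 1 (expr1n _ _); lra.
Qed.

Lemma sum_sqr_tail_sign_comb_le K (v : nat -> R) : in_unit_ball K v ->
  \sum_(s <- sign_seqs K) (4 * (sign_comb v s - clip 8 (sign_comb v s))) ^+ 2
    <= (2 ^ K)%:R.
Proof.
rewrite /in_unit_ball => v1.
have tail_le s : (4 * (sign_comb v s - clip 8 (sign_comb v s))) ^+ 2
    <= sign_comb v s ^+ 4 / 4.
  by have := sqr_clip_tail_le (sign_comb v s) (ler0n R 8); nra.
apply: le_trans (ler_sum _ (fun s _ => tail_le s)) _; rewrite -mulr_suml.
have := sign_comb_fourth_moment K v.
set q := \sum_(k < K) _ in v1 *; set N : R := (2 ^ K)%:R.
have q0 : 0 <= q by apply: sumr_ge0 => k _; exact: sqr_ge0.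
have N0 : 0 <= N by exact: ler0n.
have : q ^+ 2 <= 1 by nra.
nra.
Qed.

End UnitBall.

Section Grothendieck.
Variables (R : realType) (I J : finType) (B : I -> J -> R) (D : R).
Hypothesis cutB : forall (P : {set I}) (Q : {set J}),
  `|\sum_(i in P) \sum_(j in Q) B i j| <= D.

Definition vector_form K (u : I -> nat -> R) (w : J -> nat -> R) :=
  \sum_i \sum_j B i j * \sum_(k < K) u i k * w j k.

Let form_values : set R := [set x | exists K u w,
  [/\ forall i, in_unit_ball K (u i), forall j, in_unit_ball K (w j)
    & x = vector_form K u w]].

Let has_sup_form_values : has_sup form_values.
Proof.
split.
  exists 0, 0%N, (fun _ _ => 0), (fun _ _ => 0).
  split=> [i|j|]; rewrite ?/in_unit_ball ?big_ord0 //.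
  rewrite /vector_form big1 // => i _.
  by rewrite big1 // => j _; rewrite big_ord0 mulr0.
exists (\sum_i \sum_j `|B i j|) => _ [K [u [w [u1 w1 ->]]]].
apply: ler_sum => i _; apply: ler_sum => j _.
apply: le_trans (ler_norm _) _; rewrite normrM -[X in _ <= X]mulr1.
by rewrite ler_wpM2l // norm_dot_le1.
Qed.

Definition sign_form K (F : I -> seq bool -> R) (G : J -> seq bool -> R) :=
  (2 ^ K)%:R^-1 * \sum_(s <- sign_seqs K) \sum_i \sum_j B i j * (F i s * G j s).

Lemma vector_form_sign_form K u w :
  vector_form K u w =
  sign_form K (fun i => sign_comb (u i)) (fun j => sign_comb (w j)).
Proof.
rewrite /sign_form exchange_big mulr_sumr; apply: eq_bigr => i _.
rewrite exchange_big mulr_sumr; apply: eq_bigr => j _.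
rewrite -[\sum_(k < K) _](@mulKf _ (2 ^ K)%:R) ?pnatr_eq0 ?expn_eq0 //.
by rewrite -sign_comb_orthogonal mulrCA mulr_sumr.
Qed.

Lemma sign_form_le_cut K F G S T : 0 <= S -> 0 <= T ->
  (forall i s, `|F i s| <= S) -> (forall j s, `|G j s| <= T) ->
  sign_form K F G <= 4 * S * T * D.
Proof.
move=> S0 T0 FS GT; rewrite /sign_form ler_pdivrMl ?ltr0n ?expn_gt0 //.
rewrite mulrC -sum_sign_seqs_const; apply: ler_sum => s _.
by apply: le_trans (ler_norm _) _; apply: bilinear_le_cut.
Qed.

Lemma sign_form_le_sup K F G :
  (forall i, \sum_(s <- sign_seqs K) F i s ^+ 2 <= (2 ^ K)%:R) ->
  (forall j, \sum_(s <- sign_seqs K) G j s ^+ 2 <= (2 ^ K)%:R) ->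
  sign_form K F G <= sup form_values.
Proof.
move=> F2 G2; set N : R := (2 ^ K)%:R.
have N0 : 0 < N by rewrite ltr0n expn_gt0.
set r := Num.sqrt N^-1.
have r2 : r * r = N^-1 by rewrite -expr2 sqr_sqrtr // invr_ge0 ltW.
have unit_ball (H : seq bool -> R) (H2 : \sum_(s <- sign_seqs K) H s ^+ 2 <= N) :
    in_unit_ball (2 ^ K) (fun t => r * H (nth [::] (sign_seqs K) t)).
  rewrite /in_unit_ball (eq_bigr (fun t : 'I_(2 ^ K) =>
      N^-1 * H (nth [::] (sign_seqs K) t) ^+ 2)).
    rewrite -mulr_sumr (sum_sign_seqs_nth K (fun s => H s ^+ 2)).
    by rewrite ler_pdivrMl // mulr1.
  by move=> t _; rewrite exprMn expr2 r2.
apply: sup_upper_bound => //.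
exists (2 ^ K)%N, (fun i t => r * F i (nth [::] (sign_seqs K) t)),
  (fun j t => r * G j (nth [::] (sign_seqs K) t)).
split=> [i|j|]; rewrite ?unit_ball //.
rewrite /sign_form /vector_form exchange_big mulr_sumr; apply: eq_bigr => i _.
rewrite exchange_big mulr_sumr; apply: eq_bigr => j _.
rewrite -(sum_sign_seqs_nth K) -!mulr_sumr mulrCA; congr (_ * _).
by rewrite mulr_sumr; apply: eq_bigr => t _; rewrite -r2; ring.
Qed.

(* Splitting each Rademacher sum at height 8 bounds the bulk by the cut norm and
   leaves two tails whose forms are again admissible up to a factor 1/4. *)
Lemma vector_form_le_half_sup K u w :
  (forall i, in_unit_ball K (u i)) -> (forall j, in_unit_ball K (w j)) ->
  vector_form K u w <= 256 * D + sup form_values / 2.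
Proof.
move=> u1 w1; rewrite vector_form_sign_form.
set g := fun i => sign_comb (u i); set h := fun j => sign_comb (w j).
set cg := fun i s => clip 8 (g i s); set ch := fun j s => clip 8 (h j s).
set tg := fun i s => 4 * (g i s - cg i s); set th := fun j s => 4 * (h j s - ch j s).
have -> : sign_form K g h =
    sign_form K cg ch + sign_form K tg h / 4 + sign_form K cg th / 4.
  rewrite /sign_form -!mulrA -!mulrDr; congr (_ * _).
  rewrite !big_distrl -!big_split; apply: eq_bigr => s _ /=.
  rewrite !big_distrl -!big_split; apply: eq_bigr => i _ /=.
  rewrite !big_distrl -!big_split; apply: eq_bigr => j _ /=.
  by rewrite /tg /th /cg /ch; field.
have comb2 (v : nat -> R) : in_unit_ball K v ->
    \sum_(s <- sign_seqs K) sign_comb v s ^+ 2 <= (2 ^ K)%:R.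
  by rewrite sum_sign_comb_sqr => v1; apply: ler_piMr.
have cg2 i : \sum_(s <- sign_seqs K) cg i s ^+ 2 <= (2 ^ K)%:R.
  by apply: le_trans (comb2 _ (u1 i)); apply: ler_sum => s _; apply: sqr_clip_le.
have bulk : sign_form K cg ch <= 4 * 8 * 8 * D.
  by apply: sign_form_le_cut => // *; apply: norm_clip_le.
have tail_l := sign_form_le_sup (fun i => sum_sqr_tail_sign_comb_le (u1 i))
  (fun j => comb2 _ (w1 j)).
have tail_r := sign_form_le_sup cg2 (fun j => sum_sqr_tail_sign_comb_le (w1 j)).
lra.
Qed.

Lemma vector_form_le_cut K u w :
  (forall i, in_unit_ball K (u i)) -> (forall j, in_unit_ball K (w j)) ->
  vector_form K u w <= 512 * D.
Proof.
move=> u1 w1.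
have sup_le : sup form_values <= 256 * D + sup form_values / 2.
  by apply: ge_sup => [|_ [K' [u' [w' [u'1 w'1 ->]]]]];
    [case: has_sup_form_values | exact: vector_form_le_half_sup].
have := vector_form_le_half_sup u1 w1; lra.
Qed.

End Grothendieck.

Section Gram.
Variable R : rcfType.

Lemma quadratic_ge0_discr (c b q : R) : 0 <= c ->
  (forall t, 0 <= c * t ^+ 2 + 2 * t * b + q) -> b ^+ 2 <= c * q.
Proof.
move=> c0 quad_ge0; have [c_eq0|c_neq0] := eqVneq c 0.
  have [b_eq0|b_neq0] := eqVneq b 0; first by rewrite b_eq0 c_eq0 expr0n mul0r.
  have := quad_ge0 (- (q + 1) / (2 * b)).
  rewrite c_eq0 mul0r add0r (_ : 2 * _ * b = - (q + 1)); first lra.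
  by field.
have c_gt0 : 0 < c by rewrite lt_def c_neq0.
have e : c * (c * (- b / c) ^+ 2 + 2 * (- b / c) * b + q) = c * q - b ^+ 2.
  by field.
by have := mulr_ge0 (ltW c_gt0) (quad_ge0 (- b / c)); rewrite e subr_ge0.
Qed.

Definition quad_form N (Z : nat -> nat -> R) (v : nat -> R) :=
  \sum_(0 <= i < N) \sum_(0 <= j < N) v i * Z i j * v j.

Lemma quad_form_cons N Z (v : nat -> R) t : (forall i j, Z i j = Z j i) ->
  quad_form N.+1 Z (fun i => if i is i'.+1 then v i' else t) =
  Z 0%N 0%N * t ^+ 2 + 2 * t * (\sum_(0 <= j < N) Z 0%N j.+1 * v j)
  + quad_form N (fun i j => Z i.+1 j.+1) v.
Proof.
move=> Zsym; rewrite /quad_form !big_nat_recl //=.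
under [X in _ + X = _]eq_bigr do rewrite big_nat_recl //=.
rewrite big_split /=.
have -> : \sum_(0 <= i < N) v i * Z i.+1 0%N * t =
    t * \sum_(0 <= j < N) Z 0%N j.+1 * v j.
  by rewrite mulr_sumr; apply: eq_bigr => i _; rewrite Zsym; ring.
have -> : \sum_(0 <= i < N) t * Z 0%N i.+1 * v i =
    t * \sum_(0 <= j < N) Z 0%N j.+1 * v j.
  by rewrite mulr_sumr; apply: eq_bigr => i _; ring.
ring.
Qed.

Lemma quad_form0 N Z : quad_form N Z (fun _ => 0) = 0.
Proof. by rewrite /quad_form big1 // => i _; rewrite big1 // => j _; rewrite mulr0. Qed.

Section SchurComplement.
Variables (N : nat) (Z : nat -> nat -> R).
Hypothesis Zsym : forall i j, Z i j = Z j i.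
Hypothesis Zpsd : forall v, 0 <= quad_form N.+1 Z v.

Definition pivot_col i := Z i 0%N / Num.sqrt (Z 0%N 0%N).

Definition schur i j := Z i.+1 j.+1 - pivot_col i.+1 * pivot_col j.+1.

Let c := Z 0%N 0%N.
Let b v := \sum_(0 <= j < N) Z 0%N j.+1 * v j.
Let Zs i j := Z i.+1 j.+1.

Let quad_ge0 v t : 0 <= c * t ^+ 2 + 2 * t * b v + quad_form N Zs v.
Proof. by rewrite -quad_form_cons. Qed.

Let c_ge0 : 0 <= c.
Proof.
have := quad_ge0 (fun _ => 0) 1; rewrite /b quad_form0.
rewrite big1 => [|j _]; last exact: mulr0.
by rewrite expr1n mulr1 mulr0 !addr0.
Qed.

Let discr v : b v ^+ 2 <= c * quad_form N Zs v.
Proof. exact: quadratic_ge0_discr c_ge0 (quad_ge0 v). Qed.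

Let row0 j : c = 0 -> (j < N)%N -> Z 0%N j.+1 = 0.
Proof.
move=> c0 ltjN; have := discr (fun k => (k == j)%:R); rewrite c0 mul0r.
have jN : j \in index_iota 0 N by rewrite mem_index_iota.
rewrite /b (bigD1_seq j) ?iota_uniq //= eqxx mulr1.
rewrite big1 => [|k /negbTE ->]; last by rewrite mulr0.
by rewrite addr0 => Z2; apply/eqP; rewrite -sqrf_eq0 eq_le Z2 sqr_ge0.
Qed.

Lemma pivot_col0_mul i : (i <= N)%N -> pivot_col 0 * pivot_col i = Z i 0%N.
Proof.
move=> leiN; rewrite /pivot_col; have [c0|c_neq0] := eqVneq c 0.
  rewrite [Z 0%N 0%N]c0 sqrtr0 invr0 !(mulr0, mul0r).
  by case: i leiN => [|i] leiN; [symmetry; exact: c0 | rewrite Zsym row0].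
by rewrite mulrACA -invfM -expr2 sqr_sqrtr // mulrAC -/c mulfV // mul1r.
Qed.

Lemma schur_sym i j : schur i j = schur j i.
Proof. by rewrite /schur Zsym mulrC. Qed.

Lemma schur_psd v : 0 <= quad_form N schur v.
Proof.
have -> : quad_form N schur v =
    quad_form N Zs v - (\sum_(0 <= i < N) pivot_col i.+1 * v i) ^+ 2.
  rewrite expr2 mulr_suml /quad_form -sumrB; apply: eq_bigr => i _.
  rewrite mulr_sumr -sumrB; apply: eq_bigr => j _; rewrite /schur /Zs; ring.
have -> : \sum_(0 <= i < N) pivot_col i.+1 * v i = b v / Num.sqrt c.
  by rewrite /b mulr_suml; apply: eq_bigr => i _; rewrite /pivot_col Zsym; ring.
rewrite expr_div_n sqr_sqrtr // subr_ge0.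
have [c0|c_neq0] := eqVneq c 0.
  by have := quad_ge0 v 0; rewrite c0 invr0 !(mulr0, mul0r) !add0r.
have c_gt0 : 0 < c by rewrite lt_def c_neq0 c_ge0.
by rewrite ler_pdivrMr // mulrC discr.
Qed.

End SchurComplement.

Lemma gram_decomposition N (Z : nat -> nat -> R) :
  (forall i j, Z i j = Z j i) -> (forall v, 0 <= quad_form N Z v) ->
  exists z : nat -> nat -> R, forall i j, (i < N)%N -> (j < N)%N ->
    Z i j = \sum_(k < N) z i k * z j k.
Proof.
elim: N Z => [|N IH] Z Zsym Zpsd; first by exists (fun _ _ => 0).
have [z' z'E] := IH _ (schur_sym Zsym) (schur_psd Zsym Zpsd).
exists (fun i k => if k is k'.+1 then (if i is i'.+1 then z' i' k' else 0)
                   else pivot_col Z i).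
have pivotM := pivot_col0_mul Zsym Zpsd.
move=> i j ltiN ltjN; rewrite big_ord_recl /=.
case: i ltiN => [|i] ltiN; case: j ltjN => [|j] ltjN.
- by rewrite big1 ?addr0 ?pivotM // => k _; rewrite mul0r.
- by rewrite big1 ?addr0 ?pivotM // => k _; rewrite mul0r.
- by rewrite big1 ?addr0 1?mulrC ?pivotM // => k _; rewrite mulr0.
- by rewrite -z'E // /schur; ring.
Qed.

End Gram.

Lemma split_lshift m n (i : 'I_m) : split (lshift n i) = inl i.
Proof. exact: (unsplitK (inl _ i)). Qed.

Lemma split_rshift m n (j : 'I_n) : split (rshift m j) = inr j.
Proof. exact: (unsplitK (inr _ j)). Qed.

Lemma sum_split_ord2 (V : nmodType) m n (F : 'I_(m + n) -> 'I_(m + n) -> V) :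
  \sum_i \sum_j F i j =
    \sum_(i < m) \sum_(i' < m) F (lshift n i) (lshift n i')
  + \sum_(i < m) \sum_(j < n) F (lshift n i) (rshift m j)
  + \sum_(j < n) \sum_(i < m) F (rshift m j) (lshift n i)
  + \sum_(j < n) \sum_(j' < n) F (rshift m j) (rshift m j').
Proof.
rewrite big_split_ord /=.
under eq_bigr do rewrite big_split_ord /=.
under [X in _ + X]eq_bigr do rewrite big_split_ord /=.
by rewrite !big_split /= !addrA.
Qed.

Lemma mulmx_quadE (R : comPzRingType) N (X : 'M[R]_N) (v : 'cV[R]_N) :
  (v^T *m X *m v) 0 0 = \sum_i \sum_j v i 0 * X i j * v j 0.
Proof.
rewrite mxE exchange_big /=; apply: eq_bigr => i _.
by rewrite !mxE mulr_suml; apply: eq_bigr => j _; rewrite !mxE.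
Qed.

Lemma psd_gram (R : realType) N (X : 'M[R]_N) : psd X ->
  exists z : nat -> nat -> R, forall i j : 'I_N, X i j = \sum_(k < N) z i k * z j k.
Proof.
case=> Xsym Xpsd.
pose Z i j := if (insub i : option 'I_N) is Some i' then
                if (insub j : option 'I_N) is Some j' then X i' j' else 0 else 0.
have ZE (i j : 'I_N) : Z i j = X i j by rewrite /Z !valK.
have [|v|z zE] := @gram_decomposition _ N Z.
- move=> i j; rewrite /Z; case: insubP => [i' _ _|_]; case: insubP => [j' _ _|_] //.
  by rewrite -[in LHS]Xsym mxE.
- have -> : quad_form N Z v = \sum_(i < N) \sum_(j < N) v i * X i j * v j.
    rewrite /quad_form big_mkord; apply: eq_bigr => i _.
    by rewrite big_mkord; apply: eq_bigr => j _; rewrite ZE.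
  have := Xpsd (\col_i v i); rewrite mulmx_quadE.
  by under eq_bigr do under eq_bigr do rewrite !mxE.
by exists z => i j; rewrite -ZE zE.
Qed.

Section Bipartite.
Variables (R : realType) (m n : nat) (M : 'M[bool]_(m, n)).

Lemma frob_offdiag (X Y : 'M[R]_(m + n)) (g : 'I_m -> 'I_n -> R) : X^T = X ->
  (forall i i', Y (lshift n i) (lshift n i') = 0) ->
  (forall j j', Y (rshift m j) (rshift m j') = 0) ->
  (forall i j, Y (lshift n i) (rshift m j) = g i j) ->
  (forall i j, Y (rshift m j) (lshift n i) = g i j) ->
  frob X Y = 2 * \sum_i \sum_j X (lshift n i) (rshift m j) * g i j.
Proof.
move=> Xsym Yll Yrr Ylr Yrl; rewrite /frob sum_split_ord2.
have Xs i j : X j i = X i j by rewrite -[in LHS]Xsym mxE.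
rewrite big1 => [|i _]; last by rewrite big1 // => i' _; rewrite Yll mulr0.
rewrite [X in _ + X]big1 => [|j _]; last by rewrite big1 // => j' _; rewrite Yrr mulr0.
rewrite [X in _ + X + _]exchange_big /=.
under eq_bigr do under eq_bigr do rewrite Ylr.
under [X in _ + X + _]eq_bigr do under eq_bigr do rewrite Yrl Xs.
by rewrite add0r addr0 -mulr2n mulr_natl.
Qed.

Definition centered (i : 'I_m) (j : 'I_n) : R := (M i j)%:R - density R M.

Lemma discE (P : {set 'I_m}) (Q : {set 'I_n}) :
  disc R M P Q = \sum_(i in P) \sum_(j in Q) centered i j.
Proof.
have rowE i : \sum_(j in Q) centered i j =
    \sum_(j in Q) (M i j)%:R - density R M * #|Q|%:R.
  by rewrite sumrB sumr_const mulr_natr.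
rewrite (eq_bigr _ (fun i _ => rowE i)) sumrB sumr_const /disc -mulr_natr.
by congr (_ - _); ring.
Qed.

Lemma discX_sym (X : 'M[R]_(m + n)) : X^T = X ->
  discX M X = 2 * \sum_i \sum_j centered i j * X (lshift n i) (rshift m j).
Proof.
move=> Xsym; rewrite /discX.
rewrite (@frob_offdiag _ _ (fun i j => (M i j)%:R)) //;
  try by move=> *; rewrite mxE ?split_lshift ?split_rshift.
rewrite (@frob_offdiag _ _ (fun _ _ => 1)) //;
  try by move=> *; rewrite mxE ?split_lshift ?split_rshift.
rewrite mulrCA -mulrBr; congr (2 * _); rewrite mulr_sumr -sumrB; apply: eq_bigr => i _.
by rewrite mulr_sumr -sumrB; apply: eq_bigr => j _; rewrite /centered; ring.
Qed.

Lemma discX_le_cut D : (forall P Q, `|disc R M P Q| <= D) ->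
  forall X, psd X -> (forall i, X i i <= 1) -> discX M X <= 1024 * D.
Proof.
move=> cutD X Xpsd Xdiag; have [z zE] := psd_gram Xpsd.
have z1 (i : 'I_(m + n)) : in_unit_ball (m + n) (z i).
  by rewrite /in_unit_ball; under eq_bigr do rewrite expr2; rewrite -zE.
have cutB (P : {set 'I_m}) (Q : {set 'I_n}) :
  `|\sum_(i in P) \sum_(j in Q) centered i j| <= D by rewrite -discE.
have := vector_form_le_cut cutB (fun i => z1 (lshift n i)) (fun j => z1 (rshift m j)).
rewrite discX_sym ?(proj1 Xpsd) //.
suff -> : \sum_i \sum_j centered i j * X (lshift n i) (rshift m j) =
    vector_form centered (m + n) (fun i => z (lshift n i)) (fun j => z (rshift m j)).
  by lra.
by apply: eq_bigr => i _; apply: eq_bigr => j _; rewrite zE.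
Qed.

Definition indicator_vec (P : {set 'I_m}) (Q : {set 'I_n}) (i : 'I_(m + n)) : R :=
  match split i with inl i' => (i' \in P)%:R | inr j => (j \in Q)%:R end.

Definition indicator_mx P Q : 'M[R]_(m + n) :=
  \matrix_(i, j) (indicator_vec P Q i * indicator_vec P Q j).

Lemma indicator_mx_feasible P Q :
  psd (indicator_mx P Q) /\ forall i, indicator_mx P Q i i <= 1.
Proof.
split; last first.
  move=> i; rewrite mxE /indicator_vec.
  by case: split => [i'|j]; case: (_ \in _); rewrite ?mulr1 ?mulr0.
split; first by apply/matrixP => i j; rewrite !mxE mulrC.
move=> x; rewrite mulmx_quadE.
have -> : \sum_i \sum_j x i 0 * indicator_mx P Q i j * x j 0 =
    (\sum_i x i 0 * indicator_vec P Q i) ^+ 2.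
  rewrite expr2 mulr_suml; apply: eq_bigr => i _; rewrite mulr_sumr.
  by apply: eq_bigr => j _; rewrite mxE; ring.
exact: sqr_ge0.
Qed.

Lemma discX_indicator_mx P Q : discX M (indicator_mx P Q) = 2 * disc R M P Q.
Proof.
rewrite discX_sym; last by apply/matrixP => i j; rewrite !mxE mulrC.
rewrite discE [in RHS]big_mkcond; congr (2 * _); apply: eq_bigr => i _.
under eq_bigr do rewrite mxE /indicator_vec split_lshift split_rshift.
case: (i \in P); last by rewrite big1 // => j _; rewrite mul0r mulr0.
rewrite [in RHS]big_mkcond; apply: eq_bigr => j _.
by case: (j \in Q); rewrite ?mulr1 ?mulr0 ?mul1r.
Qed.

Lemma pdisc_le_cut D : (forall P Q, `|disc R M P Q| <= D) -> pdisc R M <= 1024 * D.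
Proof.
move=> cutD; apply: ge_sup => [|_ [X [Xpsd Xdiag] <-]]; last exact: discX_le_cut.
set X0 := indicator_mx finset.set0 finset.set0.
by exists (discX M X0), X0; first exact: indicator_mx_feasible.
Qed.

Lemma sum_centered : \sum_i \sum_j centered i j = 0.
Proof.
rewrite /centered /density; under eq_bigr do rewrite sumrB sumr_const card_ord.
rewrite sumrB sumr_const card_ord -/(ones R M) -mulrnA [(n * m)%N]mulnC.
rewrite -(mulr_natr (ones R M / _)).
have [mn0|mn_neq0] := eqVneq ((m * n)%:R : R) 0; last by rewrite divfK ?subrr.
suff -> : ones R M = 0 by rewrite !mul0r subrr.
move/eqP: mn0; rewrite pnatr_eq0 muln_eq0 => /orP[] /eqP dim0; rewrite /ones.
  by rewrite big1 // => -[i lt_im]; exfalso; move: lt_im; rewrite dim0.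
rewrite big1 // => i _.
by rewrite big1 // => -[j lt_jn]; exfalso; move: lt_jn; rewrite dim0.
Qed.

Lemma disc_quadrants P Q :
  disc R M P Q + disc R M P (~: Q) + disc R M (~: P) Q + disc R M (~: P) (~: Q)
  = 0.
Proof.
have rows (A : {set 'I_m}) : \sum_(i in A) \sum_(j in Q) centered i j
    + \sum_(i in A) \sum_(j in ~: Q) centered i j = \sum_(i in A) \sum_j centered i j.
  by rewrite -big_split; apply: eq_bigr => i _; exact: sum_setC.
have := rows P; have := rows (~: P).
have := sum_setC P (fun i => \sum_j centered i j); rewrite sum_centered !discE.
lra.
Qed.

Lemma disc_le_discp P Q : disc R M P Q <= discp R M.
Proof. by apply: le_trans (le_bigmax _ _ P); exact: (le_bigmax _ _ Q). Qed.

Lemma oppr_disc_le_discm P Q : - disc R M P Q <= discm R M.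
Proof. by apply: le_trans (le_bigmax _ _ P); exact: (le_bigmax _ _ Q). Qed.

Lemma discp_ge0 : 0 <= discp R M.
Proof. exact: bigmax_ge_id. Qed.

Lemma discm_ge0 : 0 <= discm R M.
Proof. exact: bigmax_ge_id. Qed.

Lemma norm_disc_le_discp P Q : `|disc R M P Q| <= 3 * discp R M.
Proof.
have := disc_quadrants P Q; have := disc_le_discp P Q; have := disc_le_discp P (~: Q).
have := disc_le_discp (~: P) Q; have := disc_le_discp (~: P) (~: Q).
by rewrite ler_norml; lra.
Qed.

Lemma norm_disc_le_discm P Q : `|disc R M P Q| <= 3 * discm R M.
Proof.
have := disc_quadrants P Q; have := oppr_disc_le_discm P Q.
have := oppr_disc_le_discm P (~: Q); have := oppr_disc_le_discm (~: P) Q.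
have := oppr_disc_le_discm (~: P) (~: Q).
by rewrite ler_norml; lra.
Qed.

Lemma disc_le_pdisc P Q : 2 * disc R M P Q <= pdisc R M.
Proof.
rewrite -discX_indicator_mx; apply: sup_upper_bound; last first.
  by exists (indicator_mx P Q); first exact: indicator_mx_feasible.
split; first by exists (discX M (indicator_mx P Q)), (indicator_mx P Q);
  first exact: indicator_mx_feasible.
exists (1024 * (3 * discp R M)) => _ [X [Xpsd Xdiag] <-].
exact: discX_le_cut norm_disc_le_discp _ Xpsd Xdiag.
Qed.

Lemma discp_le_pdisc : 2 * discp R M <= pdisc R M.
Proof.
have := disc_le_pdisc finset.set0 finset.set0.
rewrite /disc big_set0 !cards0 !mulr0 subr0 => pdisc_ge0.
suff : discp R M <= pdisc R M / 2 by lra.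
apply: bigmax_le => [|P _]; first lra.
apply: bigmax_le => [|Q _]; first lra.
by have := disc_le_pdisc P Q; lra.
Qed.

Lemma discm_le_discp : discm R M <= 3 * discp R M.
Proof.
have discp3_ge0 : 0 <= 3 * discp R M by rewrite mulr_ge0 ?discp_ge0.
apply: bigmax_le => [|P _] //; apply: bigmax_le => [|Q _] //.
by have := norm_disc_le_discp P Q; rewrite ler_norml; lra.
Qed.

End Bipartite.

Theorem claim2p6 (R : realType) :
  exists c1 c2 : R, 0 < c1 /\ 0 < c2 /\
    forall (m n : nat) (M : 'M[bool]_(m, n)),
      (c1 * discp R M <= pdisc R M /\ pdisc R M <= c2 * discp R M) /\
      (c1 * discm R M <= pdisc R M /\ pdisc R M <= c2 * discm R M).
Proof.
exists (1 / 2), 3072; split; first lra; split; first lra.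
move=> m n M.
have := pdisc_le_cut (norm_disc_le_discp R M).
have := pdisc_le_cut (norm_disc_le_discm R M).
have := discp_le_pdisc R M; have := discm_le_discp R M.
have := discp_ge0 R M; have := discm_ge0 R M.
lra.
Qed.
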